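(* Let $\mathcal{A}=\{A_1,\dots,A_J\}$ be a partition of $\mathcal{X}$ with $\pi_k[A_j]>0$ for all $k,j$. For every $i,j\in\{1,\dots,J\}$ and every $k\in\{0,\dots,N-1\}$, $$\frac{\int_{A_i}\int_{A_j}\min\{\pi_k(z)\pi_{k+1}(w),\,\pi_k(w)\pi_{k+1}(z)\}\,\lambda(dw)\,\lambda(dz)}{\pi_k[A_i]\,\pi_{k+1}[A_j]}\;\ge\;\delta(\mathcal{A})^2.$$
   Context: $(\mathcal{X},\mathcal{F},\lambda)$ is a measure space; $N\ge1$; $\pi_0,\dots,\pi_N$ are probability densities w.r.t. $\lambda$, and $\pi_k[A]=\int_A\pi_k\,d\lambda$. Overlap: $\delta(\mathcal{A})=\min_{|k-l|=1,\ j\in\{1,\dots,J\}}\frac{1}{\pi_k[A_j]}\int_{A_j}\min\{\pi_k(z),\pi_l(z)\}\lambda(dz)$, where $k,l$ range over $\{0,\dots,N\}$. (The left-hand side is the stationary probability of accepting a proposed swap between levels $k$ and $k+1$ given $x_{[k]}\in A_i$, $x_{[k+1]}\in A_j$.) *)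

From HB Require Import structures.
From mathcomp Require Import all_boot all_order all_algebra.
From mathcomp Require Import all_classical all_reals all_analysis.
Set Implicit Arguments. Unset Strict Implicit. Unset Printing Implicit Defensive.
Import Order.TTheory GRing.Theory Num.Theory.
Local Open Scope classical_set_scope.
Local Open Scope ring_scope.
Local Open Scope ereal_scope.

Section Defs.
Context (d : measure_display) (T : measurableType d) (R : realType)
  (lam : {measure set T -> \bar R}).

Definition piA (pi : nat -> T -> R) (k : nat) (A : set T) : \bar R :=
  \int[lam]_(x in A) (pi k x)%:E.

Definition overlap_ratio (pi : nat -> T -> R) (k l : nat) (A : set T) : \bar R :=
  (\int[lam]_(z in A) (Num.min (pi k z) (pi l z))%:E) / piA pi k A.

Definition delta (N J : nat) (pi : nat -> T -> R) (A : 'I_J -> set T) : \bar R :=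
  \big[Order.min/+oo]_(k : 'I_N.+1)
    \big[Order.min/+oo]_(l : 'I_N.+1 | (k.+1 == l :> nat) || (l.+1 == k :> nat))
      \big[Order.min/+oo]_(j < J) overlap_ratio pi k l (A j).

Definition prob_densities (N : nat) (pi : nat -> T -> R) : Prop :=
  forall k, (k <= N)%N ->
    [/\ measurable_fun setT (pi k), (forall x, 0 <= pi k x)%R &
        \int[lam]_x (pi k x)%:E = 1].

Definition is_partition (J : nat) (A : 'I_J -> set T) : Prop :=
  [/\ forall j, measurable (A j),
      forall i j, i != j -> A i `&` A j = set0 &
      \bigcup_j A j = setT].

End Defs.

From HB Require Import structures.
From mathcomp Require Import all_boot all_order all_algebra.
From mathcomp Require Import all_classical all_reals all_analysis.
From mathcomp Require Import measurable_realfun.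
Set Implicit Arguments. Unset Strict Implicit. Unset Printing Implicit Defensive.
Import Order.TTheory GRing.Theory Num.Theory.
Local Open Scope classical_set_scope.
Local Open Scope ring_scope.
Local Open Scope ereal_scope.

(* With m := min(pi_k, pi_{k+1}), the integrand of the double integral is
   pointwise at least m(z) m(w), so the double integral dominates
   (\int_{A_i} m) (\int_{A_j} m).  Dividing by pi_k[A_i] pi_{k+1}[A_j] leaves
   the product of the two overlap ratios of the adjacent pairs (k, k+1) on A_i
   and (k+1, k) on A_j, each of which is at least delta(A) >= 0. *)

Lemma mul_min_le_min_mul (R : realDomainType) (x y x' y' : R) :
  (0 <= x)%R -> (0 <= y)%R -> (0 <= x')%R -> (0 <= y')%R ->
  (Num.min x y * Num.min x' y' <= Num.min (x * y') (x' * y))%R.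
Proof.
move=> x0 y0 x'0 y'0.
have m0 : (0 <= Num.min x y)%R by rewrite le_min x0 y0.
have m'0 : (0 <= Num.min x' y')%R by rewrite le_min x'0 y'0.
rewrite le_min; apply/andP; split; first by apply: ler_pM; rewrite // ge_min lexx ?orbT.
by rewrite mulrC; apply: ler_pM; rewrite // ge_min lexx ?orbT.
Qed.

Lemma sqr_le_div_mul (R : realType) (x a b c : \bar R) (p q : R) :
  (0 < p)%R -> (0 < q)%R -> 0 <= x -> x <= a / p%:E -> x <= b / q%:E ->
  a * b <= c -> x ^+ 2 <= c / (p * q)%:E.
Proof.
move=> p0 q0 x0 xa xb abc.
rewrite inver gt_eqF // in xa; rewrite inver gt_eqF // in xb.
rewrite expe2 inver mulf_eq0 !gt_eqF //=.
apply: le_trans (lee_pmul x0 x0 xa xb) _.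
rewrite muleACA -EFinM -invfM.
by apply: lee_wpmul2r; rewrite // lee_fin invr_ge0 mulr_ge0 // ltW.
Qed.

Section iterated_integral_bound.
Context d (T : measurableType d) (R : realType) (mu : {measure set T -> \bar R}).

(* Monotonicity needs no measurability when read off the supremum of simple
   functions below the integrand; the inner integral of the theorem is not
   known to be measurable in the outer variable. *)
Lemma ge0_le_integral_nonmeas (D : set T) (f1 f2 : T -> \bar R) :
  (forall x, D x -> 0 <= f1 x) -> (forall x, D x -> f1 x <= f2 x) ->
  \int[mu]_(x in D) f1 x <= \int[mu]_(x in D) f2 x.
Proof.
move=> f10 f12.
have f20 x : D x -> 0 <= f2 x by move=> Dx; exact: le_trans (f10 _ Dx) (f12 _ Dx).
rewrite (ge0_integralE _ f10) (ge0_integralE _ f20) /=.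
apply: ereal_sup_le => _ [h /= hf1 <-]; exists h => //= x.
apply: le_trans (hf1 x) _; rewrite /patch; case: ifPn => [/set_mem Dx|_] //.
exact: f12.
Qed.

Lemma mul_integral_le_iterated (D E : set T) (f g : T -> R) (h : T -> T -> R) :
  measurable D -> measurable E -> measurable_fun D f -> measurable_fun E g ->
  (forall z, D z -> 0 <= f z)%R -> (forall w, E w -> 0 <= g w)%R ->
  (forall z w, D z -> E w -> f z * g w <= h z w)%R ->
  (\int[mu]_(z in D) (f z)%:E) * (\int[mu]_(w in E) (g w)%:E)
    <= \int[mu]_(z in D) \int[mu]_(w in E) (h z w)%:E.
Proof.
move=> mD mE mf mg f0 g0 fgh.
have intg0 : 0 <= \int[mu]_(w in E) (g w)%:E.
  by apply: integral_ge0 => w Ew; rewrite lee_fin g0.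
rewrite -ge0_integralZr //; last exact/measurable_EFinP.
apply: ge0_le_integral_nonmeas => z Dz; first by rewrite mule_ge0 // lee_fin f0.
rewrite -ge0_integralZl_EFin ?(f0 z Dz) //; last exact/measurable_EFinP.
apply: ge0_le_integral_nonmeas => w Ew; first by rewrite -EFinM lee_fin mulr_ge0 ?f0 ?g0.
by rewrite -EFinM lee_fin fgh.
Qed.

End iterated_integral_bound.

Section overlap.
Context d (T : measurableType d) (R : realType) (lam : {measure set T -> \bar R}).
Variables (N : nat) (pi : nat -> T -> R).
Hypothesis pi_dens : prob_densities lam N pi.

Lemma piA_le1 k (A : set T) : measurable A -> (k <= N)%N -> piA lam pi k A <= 1.
Proof.
move=> mA kN; have [mk pk0 <-] := pi_dens kN.
apply: ge0_subset_integral => //; first exact/measurable_EFinP.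
by move=> x _; rewrite lee_fin.
Qed.

Lemma overlap_ratio_ge0 k l (A : set T) : (k <= N)%N -> (l <= N)%N ->
  0 <= overlap_ratio lam pi k l A.
Proof.
move=> kN lN; have [_ pk0 _] := pi_dens kN; have [_ pl0 _] := pi_dens lN.
apply: mule_ge0; first by apply: integral_ge0 => z _; rewrite lee_fin le_min pk0 pl0.
by rewrite inve_ge0; apply: integral_ge0 => z _; rewrite lee_fin.
Qed.

Variables (J : nat) (A : 'I_J -> set T).

Lemma delta_ge0 : 0 <= delta lam N pi A.
Proof.
apply: le_bigmin => // k _; apply: le_bigmin => // l _.
by apply: le_bigmin => // j _; apply: overlap_ratio_ge0; rewrite -ltnS ltn_ord.
Qed.

Lemma delta_le_overlap_ratio k l j : (k <= N)%N -> (l <= N)%N ->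
  (k.+1 == l) || (l.+1 == k) -> delta lam N pi A <= overlap_ratio lam pi k l (A j).
Proof.
move=> kN lN kl.
apply: (bigmin_inf (Ordinal (kN : (k < N.+1)%N))) => //.
apply: (bigmin_inf (Ordinal (lN : (l < N.+1)%N))) => //.
exact: (bigmin_le _ j).
Qed.

End overlap.

Theorem mainTheorem5 (d : measure_display) (T : measurableType d) (R : realType)
  (lam : {measure set T -> \bar R}) (N : nat) (pi : nat -> T -> R)
  (J : nat) (A : 'I_J -> set T) :
  (1 <= N)%N ->
  prob_densities lam N pi ->
  is_partition A ->
  (forall k j, (k <= N)%N -> 0 < piA lam pi k (A j)) ->
  forall (i j : 'I_J) (k : nat), (k < N)%N ->
    (\int[lam]_(z in A i) \int[lam]_(w in A j)
        (Num.min (pi k z * pi k.+1 w) (pi k w * pi k.+1 z))%:E)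
      / (piA lam pi k (A i) * piA lam pi k.+1 (A j))
    >= delta lam N pi A ^+ 2.
Proof.
move=> _ pi_dens [mA _ _] piA_gt0 i j k kN.
have [mk pk0 _] := pi_dens k (ltnW kN); have [mk1 pk10 _] := pi_dens k.+1 kN.
pose m z := Num.min (pi k z) (pi k.+1 z).
have mm D : measurable_fun D m by apply: measurable_funTS; exact: measurable_minr.
have m0 z : (0 <= m z)%R by rewrite le_min pk0 pk10.
have double_ge : (\int[lam]_(z in A i) (m z)%:E) * (\int[lam]_(w in A j) (m w)%:E)
    <= \int[lam]_(z in A i) \int[lam]_(w in A j)
         (Num.min (pi k z * pi k.+1 w) (pi k w * pi k.+1 z))%:E.
  by apply: mul_integral_le_iterated => // z w _ _; exact: mul_min_le_min_mul.
have delta_i : delta lam N pi A <= overlap_ratio lam pi k k.+1 (A i).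
  by apply: delta_le_overlap_ratio; rewrite ?eqxx // ltnW.
have delta_j : delta lam N pi A <= overlap_ratio lam pi k.+1 k (A j).
  by apply: delta_le_overlap_ratio; rewrite ?eqxx ?orbT // ltnW.
have min_sym : \int[lam]_(z in A j) (Num.min (pi k.+1 z) (pi k z))%:E
    = \int[lam]_(z in A j) (m z)%:E by apply: eq_integral => z _; rewrite /m minC.
rewrite /overlap_ratio in delta_i; rewrite /overlap_ratio min_sym in delta_j.
move: (piA_gt0 k i (ltnW kN)) (piA_gt0 k.+1 j kN)
  (piA_le1 pi_dens (mA i) (ltnW kN)) (piA_le1 pi_dens (mA j) kN) delta_i delta_j.
case: (piA lam pi k (A i)) => [p||] //; case: (piA lam pi k.+1 (A j)) => [q||] //.
rewrite !lte_fin => p0 q0 _ _ delta_i delta_j.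
exact: sqr_le_div_mul p0 q0 (delta_ge0 pi_dens A) delta_i delta_j double_ge.
Qed.
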